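(* For every integer $s\ge 2$, there exist mutually unbiased equiangular tight frames $(v_1,\dots,v_k)$ and $(w_1,\dots,w_l)$ for $\mathbb{R}^m$, where $$k=2^{s-1}(2^s-1),\qquad l=2^{s-1}(2^s+1),\qquad m=\frac{2^{2s}-1}{3}.$$
   Context: A system of unit vectors $(v_1,\dots,v_n)$ in $\mathbb{R}^m$ is an equiangular tight frame if $|\langle v_i,v_j\rangle|$ is the same constant for all $i\ne j$ and $VV^\top=\frac{n}{m}\mathrm{I}_m$, where $V$ has columns $v_i$. Two equiangular tight frames $(v_1,\dots,v_k)$, $(w_1,\dots,w_l)$ for $\mathbb{R}^m$ are mutually unbiased if there is $c\in\mathbb{R}$ with $|\langle v_i,w_j\rangle|=c$ for all $i,j$. *)

(* Vectors in R^m are column vectors; a system of n vectors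
   is an m x n matrix V whose columns are the v_i. *)
From mathcomp Require Import all_boot all_order all_algebra.
From mathcomp Require Import reals.
Set Implicit Arguments. Unset Strict Implicit. Unset Printing Implicit Defensive.
Import Order.TTheory GRing.Theory Num.Theory.
Local Open Scope ring_scope.

Definition ip (R : realType) (m n p : nat) (V : 'M[R]_(m, n)) (W : 'M[R]_(m, p))
  (i : 'I_n) (j : 'I_p) : R :=
  \sum_(a < m) V a i * W a j.

Definition is_ETF (R : realType) (m n : nat) (V : 'M[R]_(m, n)) : Prop :=
  [/\ forall i : 'I_n, ip V V i i = 1,
      exists c : R, forall i j : 'I_n, i != j -> `|ip V V i j| = c
    & V *m V^T = (n%:R / m%:R)%:M].

Definition mutually_unbiased (R : realType) (m k l : nat)
  (V : 'M[R]_(m, k)) (W : 'M[R]_(m, l)) : Prop :=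
  exists c : R, forall (i : 'I_k) (j : 'I_l), `|ip V W i j| = c.

From mathcomp Require Import all_boot all_order all_algebra.
From mathcomp Require Import reals.
From mathcomp Require Import ring lra zify.
Set Implicit Arguments. Unset Strict Implicit. Unset Printing Implicit Defensive.
Import Order.TTheory GRing.Theory Num.Theory.
Local Open Scope ring_scope.

(* Let q be the hyperbolic quadratic form on F_2^(2s), B its polar form and t = 2^s.
   The kernel
     G(a, b) = t [a = b] + tau(q a, q b) (-1)^B(a,b),
   with tau = -(-1)^q0 inside the level set {q = q0} and tau = sqrt 3 between the
   two level sets, satisfies G^2 = 3t G, and each of its two diagonal blocks
   satisfies G_q0^2 = (3t/2) G_q0.  Both identities reduce to the character sums
     sum_b (-1)^(B(a,b) + B(b,c)) = t^2 [a = c],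
     sum_b (-1)^(q b + B(a,b) + B(b,c)) = t (-1)^(q a + q c + B(a,c)).
   Hence G / 3t is an orthogonal projection of trace (t^2 - 1)/3 = m, i.e. the Gram
   matrix of vectors x_a in R^m.  Suitably rescaled, the x_a with q a = 1 and those
   with q a = 0 have Gram matrices proportional to the blocks of G: the block identity
   makes them tight frames, the entries of G make them equiangular, and the
   off-diagonal block, of constant modulus sqrt 3, makes them mutually unbiased. *)

Lemma sign_bigaddb (R : pzRingType) (I : Type) (r : seq I) (P : pred I) (F : I -> bool) :
  (-1) ^+ (\big[addb/false]_(i <- r | P i) F i) = \prod_(i <- r | P i) (-1) ^+ F i :> R.
Proof.
by apply: (big_morph (fun b : bool => (-1) ^+ b : R) (id1 := 1) (op1 := *%R)) => [x y|];
  rewrite ?signr_addb.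
Qed.

Lemma sum_bool2 (R : nmodType) (F : bool * bool -> R) :
  \sum_x F x = F (true, true) + F (true, false) + F (false, true) + F (false, false).
Proof.
rewrite (eq_bigr (fun x => F (x.1, x.2))); last by case.
by rewrite -(pair_big xpredT xpredT (fun x y => F (x, y))) /= !big_bool -[RHS]addrA.
Qed.

Lemma prod_nat_eq_ffun (R : comPzSemiRingType) (I : finType) (T : eqType)
    (a c : {ffun I -> T}) :
  \prod_i ((a i == c i)%:R : R) = (a == c)%:R.
Proof.
have [->|ac] := eqVneq a c; first by rewrite big1 // => i _; rewrite eqxx.
have [i aci] : exists i, a i != c i.
  by apply/existsP; apply: contraNT ac => /existsPn ac; apply/eqP/ffunP => i; apply/eqP/negPn.
by rewrite (bigD1 i) //= (negbTE aci) mul0r.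
Qed.

Lemma sum_delta_mull (R : pzSemiRingType) (T : finType) (a : T) (F : T -> R) :
  \sum_b (a == b)%:R * F b = F a.
Proof.
rewrite (bigD1 a) //= eqxx mul1r big1 ?addr0 // => b.
by rewrite eq_sym => /negbTE ->; rewrite mul0r.
Qed.

Section ProjectionKernel.
Variables (R : rcfType) (T : finType).

Definition projection_kernel (P : T -> T -> R) :=
  (forall a b, P a b = P b a) /\ (forall a c, \sum_b P a b * P b c = P a c).

Lemma projection_kernel_diag P a : projection_kernel P -> P a a = \sum_b P a b ^+ 2.
Proof.
by case=> Psym <-; apply: eq_bigr => b _; rewrite [P b a]Psym expr2.
Qed.

Lemma projection_kernel_diag_ge0 P a : projection_kernel P -> 0 <= P a a.
Proof.
by move=> PP; rewrite projection_kernel_diag // sumr_ge0 // => b _; exact: sqr_ge0.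
Qed.

Lemma projection_kernel_trace0 P : projection_kernel P -> \sum_a P a a = 0 ->
  forall a b, P a b = 0.
Proof.
move=> PP tr0 a b; apply/eqP; rewrite -sqrf_eq0; apply/eqP.
have := psumr_eq0P (fun a _ => projection_kernel_diag_ge0 a PP) tr0 (i := a) isT.
by rewrite projection_kernel_diag // => /psumr_eq0P; apply=> // c _; exact: sqr_ge0.
Qed.

Lemma projection_kernel_deflate P j : projection_kernel P -> P j j != 0 ->
  let u b := P j b / Num.sqrt (P j j) in
  projection_kernel (fun a b => P a b - u a * u b) /\
  \sum_a (P a a - u a * u a) = \sum_a P a a - 1.
Proof.
move=> PP Pjj u; have [Psym Pidem] := PP.
have Pjj_gt0 : 0 < P j j by rewrite lt_def Pjj projection_kernel_diag_ge0.
have Pu a : \sum_b P a b * u b = u a.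
  rewrite /u; under eq_bigr do rewrite mulrA.
  by rewrite -mulr_suml; under eq_bigr do rewrite [P j _]Psym; rewrite Pidem Psym.
have uu : \sum_b u b * u b = 1.
  rewrite /u; under eq_bigr do rewrite mulrACA -invfM -!expr2 sqr_sqrtr ?ltW //.
  by rewrite -mulr_suml -projection_kernel_diag // divff.
split; last by rewrite sumrB uu.
split=> [a b|a c]; first by rewrite Psym mulrC.
transitivity (\sum_b P a b * P b c - u c * (\sum_b P a b * u b)
              - u a * (\sum_b P c b * u b) + u a * u c * \sum_b u b * u b).
  rewrite !mulr_sumr -!sumrB -big_split /=; apply: eq_bigr => b _.
  by rewrite [P c b]Psym; ring.
by rewrite Pidem !Pu uu; ring.
Qed.

Lemma projection_kernel_factor m P : projection_kernel P -> \sum_a P a a = m%:R ->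
  exists x : 'I_m -> T -> R, forall a b, \sum_r x r a * x r b = P a b.
Proof.
elim: m P => [|m IH] P PP trP.
  by exists (fun _ _ => 0) => a b; rewrite big_ord0 (projection_kernel_trace0 PP).
case: (pickP (fun j => P j j != 0)) => [j Pjj|P0]; last first.
  move: trP; rewrite big1 => [/eqP|a _]; first by rewrite eq_sym pnatr_eq0.
  exact/eqP/negbFE/P0.
have [P'P trP'] := projection_kernel_deflate PP Pjj.
rewrite trP -addn1 natrD addrK in trP'.
have [x' hx'] := IH _ P'P trP'.
exists (fun r => if unlift ord0 r is Some r' then x' r' else fun b => P j b / Num.sqrt (P j j)).
move=> a b; rewrite big_ord_recl unlift_none.
under eq_bigr do rewrite liftK.
by rewrite hx'; ring.
Qed.

End ProjectionKernel.

Lemma mxtrace_mulmx_tr_eq0 (R : realDomainType) m n (N : 'M[R]_(m, n)) :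
  \tr (N *m N^T) = 0 -> N = 0.
Proof.
move=> tr0; apply/matrixP => i j; rewrite mxE.
have entry_ge0 k l : 0 <= N k l * N^T l k by rewrite mxE -expr2 sqr_ge0.
have diag_ge0 k : 0 <= (N *m N^T) k k by rewrite mxE sumr_ge0.
have := psumr_eq0P (fun k _ => diag_ge0 k) tr0 (i := i) isT.
rewrite mxE => /(psumr_eq0P (fun l _ => entry_ge0 i l))/(_ j isT)/eqP.
by rewrite mxE mulf_eq0 orbb => /eqP.
Qed.

Lemma sym_mx_sqr_trace_eq0 (R : realDomainType) n (N : 'M[R]_n) :
  N^T = N -> \tr (N *m N) = 0 -> N = 0.
Proof. by move=> NT; rewrite -{2}NT; apply: mxtrace_mulmx_tr_eq0. Qed.

(* If the Gram matrix [G] of [V] satisfies [G^2 = c G], then [M = V V^T] satisfies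
   [M^2 = c M] since [M^2 - c M = V (G - c) V^T] squares to zero; the trace
   condition then forces [M = c]. *)
Lemma gram_tight (R : realFieldType) m k (V : 'M[R]_(m, k)) (c : R) :
  (V^T *m V) *m (V^T *m V) = c *: (V^T *m V) -> \tr (V^T *m V) = c * m%:R ->
  V *m V^T = c%:M.
Proof.
move=> GG trG; set M := V *m V^T.
have MT : M^T = M by rewrite /M trmx_mul trmxK.
have MM : M *m M = c *: M.
  set A := V^T *m V - c%:M.
  have AG : A *m (V^T *m V) = 0 by rewrite mulmxBl GG mul_scalar_mx subrr.
  apply/subr0_eq/sym_mx_sqr_trace_eq0.
    by rewrite linearB /= linearZ /= trmx_mul MT.
  have -> : M *m M - c *: M = V *m A *m V^T.
    by rewrite /M mulmxBr mulmxBl mul_mx_scalar -scalemxAl !mulmxA.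
  have -> : V *m A *m V^T *m (V *m A *m V^T) = V *m (A *m (V^T *m V)) *m (A *m V^T).
    by rewrite !mulmxA.
  by rewrite AG mulmx0 mul0mx mxtrace0.
have trM : \tr M = c * m%:R by rewrite /M mxtrace_mulC.
apply/subr0_eq/sym_mx_sqr_trace_eq0.
  by rewrite linearB /= tr_scalar_mx MT.
rewrite mulmxBl !mulmxBr MM mul_mx_scalar !mul_scalar_mx.
by rewrite !linearB !linearZ /= mxtrace_scalar trM -mulr_natr; ring.
Qed.

Lemma ip_trmx_mul (R : realType) m n p (V : 'M[R]_(m, n)) (W : 'M[R]_(m, p)) i j :
  ip V W i j = (V^T *m W) i j.
Proof. by rewrite mxE; apply: eq_bigr => r _; rewrite mxE. Qed.

Lemma is_ETF_gram (R : realType) m k (V : 'M[R]_(m, k)) (c : R) :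
  (0 < m)%N ->
  (forall i, ip V V i i = 1) ->
  (forall i j, i != j -> `|ip V V i j| = c) ->
  (forall i j, \sum_l ip V V i l * ip V V l j = k%:R / m%:R * ip V V i j) ->
  is_ETF V.
Proof.
move=> m_gt0 unit equi sqr; split=> //; first by exists c.
apply: gram_tight.
  apply/matrixP => i j; rewrite mxE [RHS]mxE -ip_trmx_mul -sqr.
  by apply: eq_bigr => l _; rewrite -!ip_trmx_mul.
rewrite /mxtrace (eq_bigr (fun _ => 1)) => [|i _]; last by rewrite -ip_trmx_mul.
by rewrite sumr_const card_ord divfK // pnatr_eq0 -lt0n.
Qed.

Section FrameOn.
Variables (R : realType) (T : finType) (m : nat) (x : 'I_m -> T -> R).

Definition frame_on (A : {set T}) (alpha : R) : 'M[R]_(m, #|A|) :=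
  \matrix_(r, j) (alpha * x r (enum_val j)).

Lemma ip_frame_on A B alpha beta i j :
  ip (frame_on A alpha) (frame_on B beta) i j =
  alpha * beta * \sum_r x r (enum_val i) * x r (enum_val j).
Proof. by rewrite /ip mulr_sumr; apply: eq_bigr => r _; rewrite !mxE; ring. Qed.

End FrameOn.

(* [hvec s] is F_2^(2s), the orthogonal sum of [s] hyperbolic planes: on each plane
   the quadratic form is [qf2] and its polar bilinear form is [bf2]. *)
Notation hvec s := {ffun 'I_s -> bool * bool}.

Definition qf2 (x : bool * bool) : bool := x.1 && x.2.
Definition bf2 (x y : bool * bool) : bool := (x.1 && y.2) (+) (x.2 && y.1).

Definition qform s (a : hvec s) : bool := \big[addb/false]_i qf2 (a i).
Definition bform s (a b : hvec s) : bool := \big[addb/false]_i bf2 (a i) (b i).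

Lemma bformC s (a b : hvec s) : bform a b = bform b a.
Proof.
by apply: eq_bigr => i _; rewrite /bf2 addbC [(b i).1 && _]andbC [(b i).2 && _]andbC.
Qed.

Lemma bformxx s (a : hvec s) : bform a a = false.
Proof. by rewrite /bform big1 // => i _; rewrite /bf2 andbC addbb. Qed.





Definition qlevel s (q0 : bool) : {set hvec s} := [set a | qform a == q0].

Section Characters.
Variables (R : comPzRingType) (s : nat).

Lemma sum_characters (a c : hvec s) :
  \sum_b (-1) ^+ bform a b * (-1) ^+ bform b c = (4 ^ s)%:R * (a == c)%:R :> R.
Proof.
have bf2_sum (y z : bool * bool) :
    \sum_x (-1) ^+ bf2 y x * (-1) ^+ bf2 x z = 4 * (y == z)%:R :> R.
  by rewrite sum_bool2; case: y z => [[] []] [[] []]; rewrite /bf2 /= ?expr0 ?expr1; ring.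
under eq_bigr do rewrite !sign_bigaddb -big_split.
rewrite -(bigA_distr_bigA (fun i x => (-1) ^+ bf2 (a i) x * (-1) ^+ bf2 x (c i))) /=.
by rewrite (eq_bigr _ (fun i _ => bf2_sum _ _)) big_split prodr_const
  card_ord prod_nat_eq_ffun natrX.
Qed.

Lemma sum_qform_characters (a c : hvec s) :
  \sum_b (-1) ^+ qform b * ((-1) ^+ bform a b * (-1) ^+ bform b c) =
  (2 ^ s)%:R * ((-1) ^+ qform a * (-1) ^+ qform c * (-1) ^+ bform a c) :> R.
Proof.
have qf2_sum (y z : bool * bool) :
    \sum_x (-1) ^+ qf2 x * ((-1) ^+ bf2 y x * (-1) ^+ bf2 x z) =
    2 * ((-1) ^+ qf2 y * (-1) ^+ qf2 z * (-1) ^+ bf2 y z) :> R.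
  by rewrite sum_bool2; case: y z => [[] []] [[] []]; rewrite /bf2 /qf2 /= ?expr0 ?expr1; ring.
under eq_bigr do rewrite !sign_bigaddb -!big_split.
rewrite -(bigA_distr_bigA
  (fun i x => (-1) ^+ qf2 x * ((-1) ^+ bf2 (a i) x * (-1) ^+ bf2 x (c i)))) /=.
by rewrite (eq_bigr _ (fun i _ => qf2_sum _ _)) big_split prodr_const
  card_ord natrX !sign_bigaddb -!big_split.
Qed.

Lemma sum_qform_sign : \sum_(a : hvec s) (-1) ^+ qform a = (2 ^ s)%:R :> R.
Proof.
pose z : hvec s := [ffun => (false, false)].
have bform_z b : bform z b = false by rewrite /bform big1 // => i _; rewrite ffunE.
have qform_z : qform z = false by rewrite /qform big1 // => i _; rewrite ffunE.
have := sum_qform_characters z z; rewrite qform_z bformxx !mulr1.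
by under eq_bigr do rewrite bform_z bformC bform_z !mulr1.
Qed.

Lemma card_qform (q0 : bool) :
  (#|qlevel s q0| * 2)%:R = (2 ^ s)%:R * ((2 ^ s)%:R + (-1) ^+ q0) :> R.
Proof.
have indicator (q : bool) : ((if q == q0 then 1 else 0) * 2)%:R = 1 + (-1) ^+ q0 * (-1) ^+ q :> R.
  by case: q q0 => [] []; rewrite /= ?expr0 ?expr1; ring.
rewrite -sum1_card big_mkcond /= big_distrl /= natr_sum /qlevel.
under eq_bigr do rewrite inE indicator.
rewrite big_split /= -mulr_sumr sum_qform_sign sumr_const card_ffun card_prod card_bool card_ord.
by rewrite -mulr_natr expnMn natrM; ring.
Qed.

End Characters.

Lemma card_qlevel s (q0 : bool) : (0 < s)%N ->
  #|qlevel s q0| = (2 ^ (s - 1) * (if q0 then 2 ^ s - 1 else 2 ^ s + 1))%N.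
Proof.
move=> s_gt0; have := card_qform int s q0.
have -> : (2 ^ s = 2 * 2 ^ (s - 1))%N by rewrite -expnS subn1 prednK.
have : (0 < 2 ^ (s - 1))%N by rewrite expn_gt0.
by case: q0; set e := (2 ^ (s - 1))%N; set k := #|_|; rewrite ?expr0 ?expr1; lia.
Qed.

Lemma natr_div3_pow4 (R : pzRingType) s :
  ((2 ^ (2 * s) - 1) %/ 3)%:R * 3 = (2 ^ s)%:R * (2 ^ s)%:R - 1 :> R.
Proof.
have dvd3 : (3 %| 2 ^ (2 * s) - 1)%N by rewrite expnM subn1; exact: dvdn_pred_predX.
by rewrite -natrM divnK // natrB ?expn_gt0 // mul2n -addnn expnD natrM.
Qed.

Section GramKernel.
Variables (R : rcfType) (s : nat).
Local Notation t := ((2 ^ s)%:R : R).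

Definition tau (x y : bool) : R := if x == y then - (-1) ^+ x else Num.sqrt 3.

Definition gram (a b : hvec s) : R :=
  t * (a == b)%:R + tau (qform a) (qform b) * (-1) ^+ bform a b.

Lemma tauC x y : tau x y = tau y x.
Proof. by rewrite /tau eq_sym; case: eqP => // ->. Qed.

Lemma gramC a b : gram a b = gram b a.
Proof. by rewrite /gram eq_sym tauC bformC. Qed.

Lemma gramxx a : gram a a = t - (-1) ^+ qform a.
Proof. by rewrite /gram eqxx bformxx /tau eqxx mulr1 expr0 mulr1. Qed.

Lemma sum_gram_diag : \sum_a gram a a = t * (t * t - 1).
Proof.
under eq_bigr do rewrite gramxx.
rewrite sumrB sum_qform_sign sumr_const card_ffun card_prod card_bool card_ord.
by rewrite expnMn -[t *+ _]mulr_natr natrM; ring.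
Qed.

Lemma sum_weighted_characters (h : bool -> R) (a c : hvec s) :
  \sum_b h (qform b) * ((-1) ^+ bform a b * (-1) ^+ bform b c) =
  (h true + h false) / 2 * ((4 ^ s)%:R * (a == c)%:R) +
  (h false - h true) / 2 * (t * ((-1) ^+ qform a * (-1) ^+ qform c * (-1) ^+ bform a c)).
Proof.
rewrite -sum_characters -sum_qform_characters !mulr_sumr -big_split /=.
by apply: eq_bigr => b _; case: (qform b); rewrite ?expr0 ?expr1; field.
Qed.

Lemma sum_gram_weighted (g : bool -> R) (a c : hvec s) :
  let h q := g q * tau (qform a) q * tau q (qform c) in
  \sum_b g (qform b) * (gram a b * gram b c) =
  t * t * g (qform a) * (a == c)%:R
  + t * (g (qform a) + g (qform c)) * tau (qform a) (qform c) * (-1) ^+ bform a c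
  + ((h true + h false) / 2 * ((4 ^ s)%:R * (a == c)%:R) +
     (h false - h true) / 2 * (t * ((-1) ^+ qform a * (-1) ^+ qform c * (-1) ^+ bform a c))).
Proof.
move=> h; rewrite -sum_weighted_characters.
pose delta_term b := (a == b)%:R * (t * t * g (qform b) * (b == c)%:R)
  + (a == b)%:R * (t * g (qform b) * tau (qform b) (qform c) * (-1) ^+ bform b c)
  + (c == b)%:R * (t * g (qform b) * tau (qform a) (qform b) * (-1) ^+ bform a b).
transitivity (\sum_b (delta_term b + h (qform b) * ((-1) ^+ bform a b * (-1) ^+ bform b c))).
  by apply: eq_bigr => b _; rewrite /gram /h /delta_term [b == c]eq_sym; ring.
by rewrite big_split /= !big_split /= !sum_delta_mull bformC; ring.
Qed.

Lemma mulr_sqrt3_sqrt3 (x : R) : x * Num.sqrt 3 * Num.sqrt 3 = x * 3.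
Proof. by rewrite -mulrA -expr2 sqr_sqrtr // ler0n. Qed.

Lemma gram_sqr (a c : hvec s) : \sum_b gram a b * gram b c = 3 * t * gram a c.
Proof.
have := sum_gram_weighted (fun _ => 1) a c; rewrite /= => E.
under eq_bigr do rewrite -[gram a _ * _]mul1r.
rewrite E /gram (_ : (4 ^ s)%:R = t * t); last by rewrite -natrM -expnMn.
have [<-|_] := eqVneq a c.
  by rewrite bformxx; case: (qform a); rewrite /tau /= ?expr0 ?expr1 ?mulr_sqrt3_sqrt3; field.
by case: (qform a); case: (qform c);
  rewrite /tau /= ?expr0 ?expr1 ?mulr_sqrt3_sqrt3; field.
Qed.

Lemma gram_block_sqr (q0 : bool) (a c : hvec s) : qform a = q0 -> qform c = q0 ->
  \sum_(b | qform b == q0) gram a b * gram b c = 3 * t / 2 * gram a c.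
Proof.
move=> qa qc; have := sum_gram_weighted (fun q => (q == q0)%:R) a c; rewrite /= => E.
rewrite big_mkcond /=.
rewrite (eq_bigr (fun b => (qform b == q0)%:R * (gram a b * gram b c))); last first.
  by move=> b _; case: eqP; rewrite ?mul1r ?mul0r.
rewrite E /gram (_ : (4 ^ s)%:R = t * t); last by rewrite -natrM -expnMn.
rewrite qa qc {E qa qc}; have [<-|_] := eqVneq a c.
  by rewrite bformxx; case: q0; rewrite /tau /= ?expr0 ?expr1 ?mulr_sqrt3_sqrt3; field.
by case: q0; rewrite /tau /= ?expr0 ?expr1 ?mulr_sqrt3_sqrt3; field.
Qed.

End GramKernel.

Arguments gram {R s}.

Lemma gram_factor (R : rcfType) s :
  exists x : 'I_((2 ^ (2 * s) - 1) %/ 3) -> hvec s -> R,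
    forall a b, \sum_r x r a * x r b = gram a b / (3 * (2 ^ s)%:R).
Proof.
have t_gt0 : 0 < (2 ^ s)%:R :> R by rewrite ltr0n expn_gt0.
apply: projection_kernel_factor; first split=> [a b|a c]; first by rewrite gramC.
  transitivity ((\sum_b gram a b * gram b c) / (3 * (2 ^ s)%:R * (3 * (2 ^ s)%:R)) : R).
    by rewrite mulr_suml; apply: eq_bigr => b _; field; rewrite gt_eqF.
  by rewrite gram_sqr; field; rewrite gt_eqF.
rewrite -mulr_suml sum_gram_diag; apply: (@mulIf _ 3); first by rewrite pnatr_eq0.
by rewrite natr_div3_pow4; field; rewrite gt_eqF.
Qed.

Lemma natr_exp2_ge2 (R : numDomainType) s : (0 < s)%N -> 2 <= (2 ^ s)%:R :> R.
Proof. by move=> s_gt0; rewrite ler_nat -{1}(expn1 2) leq_exp2l. Qed.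

Lemma natr_exp2_subr_sign_gt0 (R : realFieldType) s (q : bool) :
  (0 < s)%N -> 0 < (2 ^ s)%:R - (-1) ^+ q :> R.
Proof. by move/(natr_exp2_ge2 R); case: q; rewrite ?expr0 ?expr1 => ?; lra. Qed.

Section LevelFrames.
Variables (R : realType) (s : nat) (x : 'I_((2 ^ (2 * s) - 1) %/ 3) -> hvec s -> R).
Hypothesis s_gt0 : (0 < s)%N.
Hypothesis x_gram : forall a b, \sum_r x r a * x r b = gram a b / (3 * (2 ^ s)%:R).
Local Notation t := ((2 ^ s)%:R : R).
Local Notation m := ((2 ^ (2 * s) - 1) %/ 3)%N.

Definition level_frame (q0 : bool) :=
  frame_on x (qlevel s q0) (Num.sqrt (3 * t / (t - (-1) ^+ q0))).

Lemma ip_level_frame q0 i j :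
  ip (level_frame q0) (level_frame q0) i j =
  gram (enum_val i) (enum_val j) / (t - (-1) ^+ q0).
Proof.
have t2 := natr_exp2_ge2 R s_gt0; have d_gt0 := natr_exp2_subr_sign_gt0 R q0 s_gt0.
rewrite ip_frame_on -expr2 sqr_sqrtr; last first.
  by rewrite divr_ge0 ?ltW // mulr_gt0 // (lt_le_trans _ t2).
by rewrite x_gram; field; rewrite !gt_eqF // (lt_le_trans _ t2).
Qed.

Lemma level_frame_ETF q0 : is_ETF (level_frame q0).
Proof.
have t2 := natr_exp2_ge2 R s_gt0; have d_gt0 := natr_exp2_subr_sign_gt0 R q0 s_gt0.
have hm : (m%:R : R) = (t * t - 1) / 3 by rewrite -natr_div3_pow4 mulfK // pnatr_eq0.
have hk : (#|qlevel s q0|%:R : R) = t * (t + (-1) ^+ q0) / 2.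
  by rewrite -card_qform natrM mulfK // pnatr_eq0.
have km : #|qlevel s q0|%:R / m%:R = 3 * t / 2 / (t - (-1) ^+ q0) :> R.
  by rewrite hk hm; case: q0 {hk d_gt0}; rewrite ?expr0 ?expr1; field;
    apply/andP; split; apply/eqP; nra.
have q_enum (i : 'I_#|qlevel s q0|) : qform (enum_val i) = q0.
  by have := enum_valP i; rewrite inE => /eqP.
apply: (@is_ETF_gram _ _ _ _ (1 / (t - (-1) ^+ q0))).
- by rewrite -(ltr0n R) hm; nra.
- by move=> i; rewrite ip_level_frame gramxx q_enum divff ?gt_eqF.
- move=> i j ij; rewrite ip_level_frame /gram.
  have -> : (enum_val i == enum_val j) = false.
    by apply/negbTE; apply: contra ij => /eqP/enum_val_inj ->.
  rewrite !q_enum /tau eqxx mulr0 add0r !normrM normrN !normr_sign !mul1r normfV.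
  by rewrite gtr0_norm ?div1r.
- move=> i j; rewrite km ip_level_frame.
  transitivity ((\sum_(b in qlevel s q0) gram (enum_val i) b * gram b (enum_val j))
                / (t - (-1) ^+ q0) ^+ 2).
    rewrite mulr_suml [RHS]big_enum_val; apply: eq_bigr => l _.
    by rewrite !ip_level_frame; field; rewrite gt_eqF.
  rewrite (eq_bigl (fun b => qform b == q0)) => [|b]; last by rewrite inE.
  by rewrite gram_block_sqr ?q_enum //; field; rewrite gt_eqF.
Qed.

Lemma level_frames_unbiased : mutually_unbiased (level_frame true) (level_frame false).
Proof.
exists `|Num.sqrt (3 * t / (t - (-1) ^+ true)) * Num.sqrt (3 * t / (t - (-1) ^+ false))
        * (Num.sqrt 3 / (3 * t))| => i j.
have qi : qform (enum_val i) = true by have := enum_valP i; rewrite inE => /eqP.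
have qj : qform (enum_val j) = false by have := enum_valP j; rewrite inE => /eqP.
have /negbTE ij : enum_val i != enum_val j by apply/eqP => e; move: qi; rewrite e qj.
rewrite ip_frame_on x_gram /gram ij mulr0 add0r qi qj /tau /=.
by rewrite (mulrAC (Num.sqrt 3)) [X in `|X| = _]mulrA normrM normr_sign mulr1.
Qed.

End LevelFrames.

Theorem theorem4 (R : realType) (s : nat) : (2 <= s)%N ->
  exists (V : 'M[R]_((2 ^ (2 * s) - 1) %/ 3, 2 ^ (s - 1) * (2 ^ s - 1)))
         (W : 'M[R]_((2 ^ (2 * s) - 1) %/ 3, 2 ^ (s - 1) * (2 ^ s + 1))),
    [/\ is_ETF V, is_ETF W & mutually_unbiased V W].
Proof.
move=> s_ge2; have s_gt0 : (0 < s)%N by apply: leq_trans s_ge2.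
have [x x_gram] := gram_factor R s.
rewrite -(card_qlevel true s_gt0) -(card_qlevel false s_gt0).
exists (level_frame x true), (level_frame x false).
by split; [exact: level_frame_ETF | exact: level_frame_ETF | exact: level_frames_unbiased].
Qed.
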